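(* Let $\widehat{V}_2(\mathbf{A};\mathbf{Y}) = \frac{\hat\sigma^2}{n}\Big[1+\frac1n\sum_{i=1}^n\sum_{j=1}^n\mathbf{A}_{ij}\Big]$, let $\mathbf{A}^m\in\mathcal{A}(\mathbf{Y})$ maximize $\mathbf{A}\mapsto\widehat{V}_2(\mathbf{A};\mathbf{Y})$ over $\mathcal{A}(\mathbf{Y})$, let $d_i'=\min\{d_i,n-1\}$ for $i=1,\dots,n$, and let \[\widehat{V}_2'(\mathbf{Y})=\frac{\hat\sigma^2}{n}\Big[1+\frac1n\sum_{i=1}^n d_i'\Big].\] Then $\widehat{V}_2(\mathbf{A}^\circ;\mathbf{Y})\le\widehat{V}_2(\mathbf{A}^m;\mathbf{Y})\le\widehat{V}_2'(\mathbf{Y})$, and $\widehat{V}_2(\mathbf{A}^m;\mathbf{Y})=\widehat{V}_2'(\mathbf{Y})$ whenever there exists a matrix $\mathbf{A}\in\mathcal{A}(\mathbf{Y})$ with $\sum_{j=1}^n\mathbf{A}_{ij}=d_i'$ for every $i$.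
   Context: Setting: $\mathcal{G}=(\mathcal{V},\mathcal{E})$ is a simple undirected graph with a real random variable $X_i$ attached to each vertex $i$. A subset $\mathcal{V}_S\subseteq\mathcal{V}$ with $|\mathcal{V}_S|=n$ is observed, labeled $1,\dots,n$. $\mathcal{G}_S=(\mathcal{V}_S,\mathcal{E}_S)$ is the subgraph of $\mathcal{G}$ induced by $\mathcal{V}_S$, with $n\times n$ adjacency matrix $\mathbf{A}^\circ$. $\mathcal{G}_R=(\mathcal{V}_S,\mathcal{E}_R)$ is a subgraph with $\mathcal{E}_R\subseteq\mathcal{E}_S$. For $i\in\mathcal{V}_S$, $d_i$ is the degree of $i$ in $\mathcal{G}$. Observed data: $\mathbf{Y}=((X_1,\dots,X_n),(d_1,\dots,d_n),\mathcal{G}_R)$. Let $\overline{X}=\frac1n\sum_i X_i$ and $\hat\sigma^2=\frac1n\sum_i(X_i-\overline{X})^2$. A binary symmetric $n\times n$ matrix $\mathbf{A}$ with zero diagonal is compatible with $\mathbf{Y}$ if $\mathbf{A}_{ij}=\mathbf{A}_{ji}=1$ for every $\{i,j\}\in\mathcal{E}_R$ and $\sum_j\mathbf{A}_{ij}\le d_i$ for every $i$; $\mathcal{A}(\mathbf{Y})$ is the set of compatible matrices (it contains $\mathbf{A}^\circ$). *)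

From HB Require Import structures.
From mathcomp Require Import all_boot all_order all_algebra.
Set Implicit Arguments. Unset Strict Implicit. Unset Printing Implicit Defensive.
Import Order.TTheory GRing.Theory Num.Theory.
Local Open Scope ring_scope.

Definition simple_graph (V : finType) (e : rel V) : Prop :=
  (forall u v, e u v = e v u) /\ (forall v, ~~ e v v).

Definition degree (V : finType) (e : rel V) (v : V) : nat := #|[set w | e v w]|.

(* adjacency matrix A° of the subgraph G_S induced by the labelled vertices *)
Definition adj_induced (V : finType) (e : rel V) (n : nat) (lab : 'I_n -> V)
  : 'M[bool]_n := \matrix_(i, j) e (lab i) (lab j).

Definition rowsum (n : nat) (A : 'M[bool]_n) (i : 'I_n) : nat :=
  (\sum_(j < n) (A i j : nat))%N.

(* A compatible with Y = (X, d, G_R), G_R given by its edge relation ER *)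
Definition compatible (n : nat) (d : 'I_n -> nat) (ER : rel 'I_n)
  (A : 'M[bool]_n) : Prop :=
  (forall i j, A i j = A j i) /\ (forall i, A i i = false) /\
  (forall i j, ER i j -> A i j /\ A j i) /\
  (forall i, (rowsum A i <= d i)%N).

Definition xbar (R : realFieldType) (n : nat) (X : 'I_n -> R) : R :=
  n%:R^-1 * \sum_(i < n) X i.

Definition sigma2hat (R : realFieldType) (n : nat) (X : 'I_n -> R) : R :=
  n%:R^-1 * \sum_(i < n) (X i - xbar X) ^+ 2.

Definition V2 (R : realFieldType) (n : nat) (X : 'I_n -> R) (A : 'M[bool]_n) : R :=
  sigma2hat X / n%:R * (1 + n%:R^-1 * \sum_(i < n) \sum_(j < n) (A i j : nat)%:R).

Definition V2' (R : realFieldType) (n : nat) (X : 'I_n -> R) (d : 'I_n -> nat) : R :=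
  sigma2hat X / n%:R * (1 + n%:R^-1 * \sum_(i < n) (minn (d i) n.-1)%:R).

From HB Require Import structures.
From mathcomp Require Import all_boot all_order all_algebra.
Set Implicit Arguments. Unset Strict Implicit. Unset Printing Implicit Defensive.
Import Order.TTheory GRing.Theory Num.Theory.
Local Open Scope ring_scope.

(* V2 is an increasing affine function of the total row sum, and every
   compatible row sum is at most min(d_i, n - 1) (at most d_i by compatibility,
   at most n - 1 since the diagonal vanishes).  Hence V2' bounds V2 on the whole
   feasible set and is attained whenever some compatible matrix has all row
   sums equal to d_i'; the induced adjacency matrix is itself compatible, since
   its rows count neighbours among the observed vertices only. *)

Lemma rowsum_card (n : nat) (A : 'M[bool]_n) (i : 'I_n) :
  rowsum A i = #|[pred j | A i j]|.
Proof.
rewrite /rowsum -sum1_card [RHS]big_mkcond /=; apply: eq_bigr => j _.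
by rewrite inE; case: (A i j).
Qed.

Lemma rowsum_le_pred (n : nat) (A : 'M[bool]_n) (i : 'I_n) :
  A i i = false -> (rowsum A i <= n.-1)%N.
Proof.
move=> Aii; rewrite rowsum_card -[n in n.-1]card_ord -(cardC1 i).
apply/subset_leq_card/subsetP => j; rewrite !inE.
by apply: contraTneq => ->; rewrite Aii.
Qed.

Lemma compatible_rowsum_le (n : nat) (d : 'I_n -> nat) (ER : rel 'I_n)
    (A : 'M[bool]_n) (i : 'I_n) :
  compatible d ER A -> (rowsum A i <= minn (d i) n.-1)%N.
Proof. by case=> _ [Adiag [_ Ad]]; rewrite leq_min Ad rowsum_le_pred. Qed.

Lemma rowsum_adj_induced_le_degree (V : finType) (e : rel V) (n : nat)
    (lab : 'I_n -> V) (i : 'I_n) :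
  injective lab -> (rowsum (adj_induced e lab) i <= degree e (lab i))%N.
Proof.
move=> labI; rewrite rowsum_card /degree -(card_imset _ labI).
apply/subset_leq_card/subsetP => w /imsetP[j].
by rewrite !inE /adj_induced mxE => ej ->.
Qed.

Lemma adj_induced_compatible (V : finType) (e : rel V) (n : nat)
    (lab : 'I_n -> V) (ER : rel 'I_n) :
  simple_graph e -> injective lab ->
  (forall i j, ER i j -> e (lab i) (lab j)) ->
  compatible (fun i => degree e (lab i)) ER (adj_induced e lab).
Proof.
move=> [esym eirr] labI ERe; rewrite /adj_induced.
split; [|split; [|split]] => [i j|i|i j ERij|i].
- by rewrite !mxE esym.
- by rewrite mxE; apply/negbTE.
- by rewrite !mxE [e (lab j) _]esym ERe.
- exact: rowsum_adj_induced_le_degree.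
Qed.

Section V2Bounds.

Variables (R : realFieldType) (n : nat) (X : 'I_n -> R).

Lemma V2E (A : 'M[bool]_n) :
  V2 X A = sigma2hat X / n%:R * (1 + n%:R^-1 * \sum_(i < n) (rowsum A i)%:R).
Proof.
by rewrite /V2; congr (_ * (1 + _ * _)); apply: eq_bigr => i _; rewrite natr_sum.
Qed.

Lemma sigma2hat_div_ge0 : 0 <= sigma2hat X / n%:R.
Proof.
apply/divr_ge0/ler0n/mulr_ge0; first by rewrite invr_ge0.
by apply: sumr_ge0 => i _; apply: sqr_ge0.
Qed.

Lemma V2_le_V2' (d : 'I_n -> nat) (A : 'M[bool]_n) :
  (forall i, rowsum A i <= minn (d i) n.-1)%N -> V2 X A <= V2' X d.
Proof.
move=> Ale; rewrite V2E /V2' ler_wpM2l ?sigma2hat_div_ge0 // lerD2l.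
rewrite ler_wpM2l ?invr_ge0 // ler_sum // => i _.
by rewrite ler_nat.
Qed.

Lemma V2_eq_V2' (d : 'I_n -> nat) (A : 'M[bool]_n) :
  (forall i, rowsum A i = minn (d i) n.-1) -> V2 X A = V2' X d.
Proof.
by move=> Aeq; rewrite V2E /V2'; congr (_ * (1 + _ * _)); apply: eq_bigr => i _; rewrite Aeq.
Qed.

End V2Bounds.

Theorem lemma1 (R : realFieldType) (V : finType) (e : rel V) (n : nat)
  (lab : 'I_n -> V) (X : 'I_n -> R) (ER : rel 'I_n) (Am : 'M[bool]_n) :
  simple_graph e ->
  injective lab ->
  (forall i j, ER i j = ER j i) ->
  (forall i j, ER i j -> e (lab i) (lab j)) ->
  let d := fun i => degree e (lab i) in
  compatible d ER Am ->
  (forall A, compatible d ER A -> V2 X A <= V2 X Am) ->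
  [/\ V2 X (adj_induced e lab) <= V2 X Am,
      V2 X Am <= V2' X d &
      ((exists A, compatible d ER A /\ forall i, rowsum A i = minn (d i) n.-1) ->
       V2 X Am = V2' X d)].
Proof.
move=> esimple labI _ ERe d cAm Am_max.
have Am_le : V2 X Am <= V2' X d.
  by apply: V2_le_V2' => i; apply: compatible_rowsum_le cAm.
split=> //; first exact/Am_max/adj_induced_compatible.
case=> A [cA Aeq]; apply/eqP; rewrite eq_le Am_le -(V2_eq_V2' X Aeq).
exact: Am_max.
Qed.
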